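(* Let $X$ be a separated algebraic variety over $\mathbb{C}$ and let $Z$ and $W$ be finite groups acting on $X$ by morphisms such that the two actions commute: $w(z\cdot x)=z\cdot w(x)$ for all $w\in W$, $z\in Z$, $x\in X$. Let $X^\circ=\{x\in X: W_x=\{1\}\}$, let $Y=X/W$ with the quotient topology of the Zariski topology on $X$, with the induced action of $Z$. Let $z\in Z$ be such that $Y^z=\{y\in Y: z\cdot y=y\}$ is irreducible. If there exist $w_1,w_2\in W$ and $x_1,x_2\in X^\circ$ with $w_i(x_i)=z\cdot x_i$ for $i=1,2$, then $w_1$ is conjugate to $w_2$ in $W$.
   Context: $W_x$ denotes the stabilizer of $x$ in $W$. *)

From mathcomp Require Import all_boot all_algebra all_fingroup.
From mathcomp Require Import Rstruct complex.
From mathcomp Require Import mpoly.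
Set Implicit Arguments. Unset Strict Implicit. Unset Printing Implicit Defensive.
Import GRing.Theory.
Local Open Scope ring_scope.

Definition C : closedFieldType := complex.complex Rdefinitions.R.

Definition pt (n : nat) := 'I_n -> C.

Definition zero_set n (S : {mpoly C[n]} -> Prop) : pt n -> Prop :=
  fun v => forall p, S p -> p.@[v] = 0.
Definition zclosed n (A : pt n -> Prop) : Prop :=
  exists S : {mpoly C[n]} -> Prop, forall v, A v <-> zero_set S v.
Definition zopen n (O : pt n -> Prop) : Prop :=
  zclosed (fun v => ~ O v).

Definition rel_closed n (V Z : pt n -> Prop) : Prop :=
  exists A, zclosed A /\ forall v, Z v <-> (V v /\ A v).
Definition rel_open n (V O : pt n -> Prop) : Prop :=
  exists A, zopen A /\ forall v, O v <-> (V v /\ A v).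

Definition regular_fun n (O : pt n -> Prop) (f : pt n -> C) : Prop :=
  forall p, O p -> exists (N : pt n -> Prop) (g h : {mpoly C[n]}),
    [/\ zopen N, N p &
     forall q, N q -> O q -> h.@[q] != 0 /\ f q = g.@[q] / h.@[q]].
Definition regular_map n m (O : pt n -> Prop) (t : pt n -> pt m) : Prop :=
  forall k : 'I_m, regular_fun O (fun v => t v k).

Definition pairpt n m (u : pt n) (v : pt m) : pt (n + m) :=
  fun k => match split k with inl a => u a | inr b => v b end.

Definition img (A B : Type) (f : A -> B) (P : A -> Prop) : B -> Prop :=
  fun b => exists a, P a /\ f a = b.

(** A separated algebraic variety over C, given by a finite atlas of affine
    charts: chart i identifies the subset cdom i of the points with the affine
    algebraic set V_i = zero_set (ceqs i) in C^(cdim i); overlaps are open,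
    transition maps are regular, and the variety is separated (the diagonal is
    closed, i.e. the graph of each chart change is closed in V_i x V_j). *)
Unset Implicit Arguments.
Record variety := Variety {
  vpt : Type;
  nch : nat;
  cdim : 'I_nch -> nat;
  cdom : 'I_nch -> vpt -> Prop;
  cmap : forall i, vpt -> pt (cdim i);
  ceqs : forall i, {mpoly C[cdim i]} -> Prop;
  ccover : forall x, exists i, cdom i x;
  cinj : forall i x y, cdom i x -> cdom i y -> cmap i x = cmap i y -> x = y;
  conto : forall i v, zero_set (ceqs i) v <-> img (cmap i) (cdom i) v;
  copen : forall i j, rel_open (zero_set (ceqs i))
            (img (cmap i) (fun x => cdom i x /\ cdom j x));
  ctrans : forall i j, exists t : pt (cdim i) -> pt (cdim j),
    regular_map (img (cmap i) (fun x => cdom i x /\ cdom j x)) t /\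
    forall x, cdom i x -> cdom j x -> t (cmap i x) = cmap j x;
  csep : forall i j,
    rel_closed (fun w : pt (cdim i + cdim j) =>
                  zero_set (ceqs i) (fun a => w (lshift (cdim j) a)) /\
                  zero_set (ceqs j) (fun b => w (rshift (cdim i) b)))
               (img (fun x => pairpt (cmap i x) (cmap j x))
                    (fun x => cdom i x /\ cdom j x))
}.
Set Implicit Arguments.
Arguments cmap {_} i _.
Arguments cdom {_} i _.
Arguments ceqs {_} i _.
Arguments cdim {_} i.

Definition vclosed (X : variety) (Zs : vpt X -> Prop) : Prop :=
  forall i, rel_closed (zero_set (ceqs i)) (img (cmap i) (fun x => cdom i x /\ Zs x)).

Definition vmorphism (X X' : variety) (f : vpt X -> vpt X') : Prop :=
  (forall Zs, vclosed Zs -> vclosed (fun x => Zs (f x))) /\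
  forall i j, exists t : pt (cdim i) -> pt (cdim j),
    regular_map (img (cmap i) (fun x => cdom i x /\ cdom j (f x))) t /\
    forall x, cdom i x -> cdom j (f x) -> t (cmap i x) = cmap j (f x).

Definition action_by_morphisms (G : finGroupType) (X : variety)
    (act : G -> vpt X -> vpt X) : Prop :=
  [/\ forall x, act 1%g x = x,
      forall a b x, act (a * b)%g x = act a (act b x) &
      forall a, vmorphism (act a)].

Definition free_locus (W : finGroupType) (X : variety)
    (actW : W -> vpt X -> vpt X) : vpt X -> Prop :=
  fun x => forall w, actW w x = x -> w = 1%g.

Definition orbit (W : finGroupType) (X : variety)
    (actW : W -> vpt X -> vpt X) (x : vpt X) : vpt X -> Prop :=
  fun y => exists w, y = actW w x.
Definition quot (W : finGroupType) (X : variety) (actW : W -> vpt X -> vpt X) :=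
  {O : vpt X -> Prop | exists x, O = orbit actW x}.
Definition qproj (W : finGroupType) (X : variety) (actW : W -> vpt X -> vpt X)
    (x : vpt X) : quot actW :=
  exist _ (orbit actW x) (ex_intro _ x erefl).

Definition qclosed (W : finGroupType) (X : variety) (actW : W -> vpt X -> vpt X)
    (A : quot actW -> Prop) : Prop :=
  vclosed (fun x => A (qproj actW x)).

Definition qirreducible (W : finGroupType) (X : variety)
    (actW : W -> vpt X -> vpt X) (S : quot actW -> Prop) : Prop :=
  (exists y, S y) /\
  forall A B, qclosed A -> qclosed B -> (forall y, S y -> A y \/ B y) ->
    (forall y, S y -> A y) \/ (forall y, S y -> B y).

Definition qfixed (W Z : finGroupType) (X : variety)
    (actW : W -> vpt X -> vpt X) (actZ : Z -> vpt X -> vpt X) (z : Z) :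
    quot actW -> Prop :=
  fun y => img (actZ z) (sval y) = sval y.

Arguments qfixed {W Z X} actW actZ z _.
Arguments qirreducible {W X} actW S.
Arguments qclosed {W X} actW A.

From Pilot Require Import Defs.
From mathcomp Require Import all_boot all_algebra all_fingroup.
From mathcomp Require Import mpoly ring.
From Stdlib Require Import Classical FunctionalExtensionality PropExtensionality.
Set Implicit Arguments. Unset Strict Implicit. Unset Printing Implicit Defensive.
Import GRing.Theory.
Local Open Scope ring_scope.

(* For a conjugation-stable set Q of W, the locus of the x with w x = z x for
   some w in Q is closed in X (a finite union of equalizers of morphisms, which
   are closed because X is separated) and W-stable, so its image in Y = X/W is
   closed. Taking for Q the class of w1 and its complement covers Y^z by two
   closed sets, so the irreducible Y^z lies in one of them. As W acts freely at
   x1 and x2, the element w with w x_i = z x_i is unique, which rules out the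
   complement and puts w2 in the class of w1. *)

Lemma zclosed_ext n (A B : pt n -> Prop) :
  zclosed A -> (forall v, A v <-> B v) -> zclosed B.
Proof. by move=> [S HS] AB; exists S => v; rewrite -AB. Qed.

Lemma zclosedU n (A B : pt n -> Prop) :
  zclosed A -> zclosed B -> zclosed (fun v => A v \/ B v).
Proof.
move=> [S HS] [T HT].
exists (fun r => exists p q, [/\ S p, T q & r = p * q]) => v; split.
  move=> [/HS HA|/HT HB] r [p [q [Sp Tq ->]]]; rewrite mevalM.
    by rewrite (HA p Sp) mul0r.
  by rewrite (HB q Tq) mulr0.
move=> HST; apply: NNPP => /not_or_and [/HS nA /HT nB].
have [p Sp /eqP p_neq0] : exists2 p, S p & p.@[v] <> 0.
  by apply: NNPP => np; apply: nA => p Sp; apply: NNPP => pv; apply: np; exists p.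
have [q Tq /eqP q_neq0] : exists2 q, T q & q.@[v] <> 0.
  by apply: NNPP => nq; apply: nB => q Tq; apply: NNPP => qv; apply: nq; exists q.
by move: (HST (p * q) (ex_intro _ p (ex_intro _ q (And3 Sp Tq erefl))));
  rewrite mevalM => /eqP; rewrite mulf_eq0 (negbTE p_neq0) (negbTE q_neq0).
Qed.

Lemma zclosed_set0 n : zclosed (fun _ : pt n => False).
Proof.
exists (fun p => p = 1) => v; split=> // /(_ 1 erefl).
by rewrite meval1 => /eqP; rewrite oner_eq0.
Qed.

Lemma zclosed_bigcap n (F : (pt n -> Prop) -> Prop) :
  (forall A, F A -> zclosed A) -> zclosed (fun v => forall A, F A -> A v).
Proof.
move=> Fcl.
exists (fun p => exists A S, [/\ F A, forall v, A v <-> zero_set S v & S p]) => v.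
split=> [Av p [A [S [FA AS Sp]]]|Sv A FA]; first exact: (AS v).1 (Av A FA) p Sp.
have [S AS] := Fcl A FA; apply/AS => p Sp; apply: Sv; by exists A, S.
Qed.

Lemma zopenC n (A : pt n -> Prop) : zclosed A -> zopen (fun v => ~ A v).
Proof. by move=> HA; apply: (zclosed_ext HA) => v; split=> [Av /(_ Av)|/NNPP]. Qed.

Lemma zopenT n : zopen (fun _ : pt n => True).
Proof. by apply: (zclosed_ext (@zclosed_set0 n)) => v. Qed.

Lemma zopenI n (A B : pt n -> Prop) :
  zopen A -> zopen B -> zopen (fun v => A v /\ B v).
Proof. by move=> HA HB; apply: (zclosed_ext (zclosedU HA HB)) => v; tauto. Qed.

Lemma zopen_meval_neq0 n (g : {mpoly C[n]}) : zopen (fun v => g.@[v] != 0).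
Proof.
exists (fun p => p = g) => v; split=> [gv p ->|/(_ g erefl) ->].
  by apply/eqP/negPn/negP.
by rewrite eqxx.
Qed.

Section RegularFunctions.
Variables (n : nat) (O : pt n -> Prop).

Lemma regular_fun_cst c : regular_fun O (fun _ => c).
Proof.
move=> p _; exists (fun _ => True), c%:MP, 1; split=> //; first exact: zopenT.
by move=> q _ _; rewrite mevalC meval1 oner_eq0 divr1.
Qed.

Lemma regular_fun_sub (O' : pt n -> Prop) f :
  (forall v, O' v -> O v) -> regular_fun O f -> regular_fun O' f.
Proof.
move=> O'O Hf p /O'O /Hf [N [g [h [HN Np Hq]]]].
by exists N, g, h; split=> // q Nq /O'O; apply: Hq.
Qed.

Lemma eq_regular_fun f f' :
  (forall v, O v -> f v = f' v) -> regular_fun O f -> regular_fun O f'.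
Proof.
move=> ff' Hf p Op; have [N [g [h [HN Np Hq]]]] := Hf p Op.
by exists N, g, h; split=> // q Nq Oq; rewrite -ff' //; apply: Hq.
Qed.

Lemma regular_funD f1 f2 : regular_fun O f1 -> regular_fun O f2 ->
  regular_fun O (fun v => f1 v + f2 v).
Proof.
move=> H1 H2 p Op.
have [N1 [g1 [h1 [HN1 Np1 Hq1]]]] := H1 p Op.
have [N2 [g2 [h2 [HN2 Np2 Hq2]]]] := H2 p Op.
exists (fun v => N1 v /\ N2 v), (g1 * h2 + g2 * h1), (h1 * h2).
split=> //; first exact: zopenI.
move=> q [Nq1 Nq2] Oq; have [nz1 ->] := Hq1 q Nq1 Oq; have [nz2 ->] := Hq2 q Nq2 Oq.
rewrite !mevalM mevalD !mevalM mulf_neq0 //; split=> //.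
by field; apply/andP.
Qed.

Lemma regular_funM f1 f2 : regular_fun O f1 -> regular_fun O f2 ->
  regular_fun O (fun v => f1 v * f2 v).
Proof.
move=> H1 H2 p Op.
have [N1 [g1 [h1 [HN1 Np1 Hq1]]]] := H1 p Op.
have [N2 [g2 [h2 [HN2 Np2 Hq2]]]] := H2 p Op.
exists (fun v => N1 v /\ N2 v), (g1 * g2), (h1 * h2); split=> //; first exact: zopenI.
move=> q [Nq1 Nq2] Oq; have [nz1 ->] := Hq1 q Nq1 Oq; have [nz2 ->] := Hq2 q Nq2 Oq.
rewrite !mevalM mulf_neq0 //; split=> //.
by field; apply/andP.
Qed.

Lemma regular_fun_sum (I : Type) (r : seq I) (F : I -> pt n -> C) :
  (forall i, regular_fun O (F i)) -> regular_fun O (fun v => \sum_(i <- r) F i v).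
Proof.
move=> HF; elim: r => [|i r IH].
  by apply: (eq_regular_fun _ (regular_fun_cst 0)) => v _; rewrite big_nil.
by apply: (eq_regular_fun _ (regular_funD (HF i) IH)) => v _; rewrite big_cons.
Qed.

Lemma regular_fun_prod (I : Type) (r : seq I) (F : I -> pt n -> C) :
  (forall i, regular_fun O (F i)) -> regular_fun O (fun v => \prod_(i <- r) F i v).
Proof.
move=> HF; elim: r => [|i r IH].
  by apply: (eq_regular_fun _ (regular_fun_cst 1)) => v _; rewrite big_nil.
by apply: (eq_regular_fun _ (regular_funM (HF i) IH)) => v _; rewrite big_cons.
Qed.

Lemma regular_funX f k : regular_fun O f -> regular_fun O (fun v => f v ^+ k).
Proof.
move=> Hf; elim: k => [|k IH].
  by apply: (eq_regular_fun _ (regular_fun_cst 1)) => v _; rewrite expr0.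
by apply: (eq_regular_fun _ (regular_funM Hf IH)) => v _; rewrite exprS.
Qed.

Lemma regular_fun_meval m (u : pt n -> pt m) (s : {mpoly C[m]}) :
  (forall k, regular_fun O (fun v => u v k)) -> regular_fun O (fun v => s.@[u v]).
Proof.
move=> Hu; apply: (eq_regular_fun (fun v _ => esym (mevalE (u v) s))).
apply: regular_fun_sum => mm; apply: regular_funM; first exact: regular_fun_cst.
by apply: regular_fun_prod => i; apply: regular_funX.
Qed.

Lemma regular_fun_neq0_nbhd F p : regular_fun O F -> O p -> F p != 0 ->
  exists N, [/\ zopen N, N p & forall q, N q -> O q -> F q != 0].
Proof.
move=> HF Op Fp; have [N [g [h [HN Np Hq]]]] := HF p Op.
have [_ FpE] := Hq p Np Op.
have gp : g.@[p] != 0 by apply: contraNneq Fp; rewrite FpE => ->; rewrite mul0r.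
exists (fun v => N v /\ g.@[v] != 0); split=> //; first exact: zopenI (zopen_meval_neq0 g).
move=> q [Nq gq] Oq; have [hq ->] := Hq q Nq Oq.
by rewrite mulf_neq0 // invr_eq0.
Qed.

End RegularFunctions.

Lemma pairpt_lshift n m (u : pt n) (v : pt m) :
  (fun a => pairpt u v (lshift m a)) = u.
Proof.
by apply: functional_extensionality => a; rewrite /pairpt (unsplitK (inl a : 'I_n + 'I_m)).
Qed.

Lemma pairpt_rshift n m (u : pt n) (v : pt m) :
  (fun b => pairpt u v (rshift n b)) = v.
Proof.
by apply: functional_extensionality => b; rewrite /pairpt (unsplitK (inr b : 'I_n + 'I_m)).
Qed.

Arguments conto {_} i v.
Arguments cinj {_} i x y.
Arguments copen {_} i j.
Arguments csep {_} i j.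
Arguments ccover {_} x.

Section ClosedSubsets.
Variable X : variety.

Lemma cmap_zero_set i (x : vpt X) : cdom i x -> zero_set (ceqs i) (cmap i x).
Proof. by move=> dx; apply/conto; exists x. Qed.

Lemma vclosed_ext (A B : vpt X -> Prop) :
  vclosed A -> (forall x, A x <-> B x) -> vclosed B.
Proof.
move=> HA AB i; have [Z [HZ ZE]] := HA i; exists Z; split=> // v; rewrite -ZE.
by split=> -[x [[d /AB Ax] e]]; exists x.
Qed.

Lemma vclosed_set0 : vclosed (fun _ : vpt X => False).
Proof.
move=> i; exists (fun _ => False); split; first exact: zclosed_set0.
by move=> v; split=> [[x [[_ []] _]]|[]].
Qed.

Lemma vclosedU (A B : vpt X -> Prop) :
  vclosed A -> vclosed B -> vclosed (fun x => A x \/ B x).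
Proof.
move=> HA HB i; have [Z1 [HZ1 e1]] := HA i; have [Z2 [HZ2 e2]] := HB i.
exists (fun v => Z1 v \/ Z2 v); split; first exact: zclosedU.
move=> v; split.
  move=> [x [[d [Ax|Bx]] <-]].
    by have [] := (e1 (cmap i x)).1 (ex_intro _ x (conj (conj d Ax) erefl)); tauto.
  by have [] := (e2 (cmap i x)).1 (ex_intro _ x (conj (conj d Bx) erefl)); tauto.
move=> [V [Z1v|Z2v]].
  by have [x [[d Ax] ex]] := (e1 v).2 (conj V Z1v); exists x; tauto.
by have [x [[d Bx] ex]] := (e2 v).2 (conj V Z2v); exists x; tauto.
Qed.

Lemma vclosed_exists (I : finType) (A : I -> vpt X -> Prop) :
  (forall i, vclosed (A i)) -> vclosed (fun x => exists i, A i x).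
Proof.
move=> HA.
suff /(_ (enum I)) /vclosed_ext :
    forall s : seq I, vclosed (fun x => exists2 i, i \in s & A i x).
  by apply=> x; split=> [[i _ Ax]|[i Ax]]; [exists i | exists i; rewrite ?mem_enum].
elim=> [|i s IH].
  by apply: (vclosed_ext vclosed_set0) => x; split=> // -[].
apply: (vclosed_ext (vclosedU (HA i) IH)) => x; split.
  move=> [Ax|[j js Ax]]; first by exists i; rewrite ?mem_head.
  by exists j; rewrite // in_cons js orbT.
by move=> [j]; rewrite in_cons => /orP[/eqP->|js Ax]; [left|right; exists j].
Qed.

Lemma vclosed_local (E : vpt X -> Prop) :
  (forall i x0, cdom i x0 -> ~ E x0 -> exists N, [/\ zopen N, N (cmap i x0) &
       forall x, cdom i x -> N (cmap i x) -> ~ E x]) -> vclosed E.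
Proof.
move=> Hloc i.
pose avoids (N : pt (cdim i) -> Prop) :=
  zopen N /\ forall x, cdom i x -> N (cmap i x) -> ~ E x.
exists (fun v => forall A, (exists N, avoids N /\ A = fun v => ~ N v) -> A v); split.
  by apply: zclosed_bigcap => A [N [[zN _] ->]].
move=> v; split.
  move=> [x [[d Ex] <-]]; split; first exact: cmap_zero_set.
  by move=> A [N [[_ HN] ->]] Nx; apply: HN x d Nx Ex.
move=> [/conto [x [d <-]] Hv]; exists x; split=> //; split=> //.
apply: NNPP => nE; have [N [zN Nx HN]] := Hloc i x d nE.
by apply: (Hv (fun v => ~ N v)) Nx; exists N; split.
Qed.

Lemma vclosed_cdomC j : vclosed (fun x : vpt X => ~ cdom j x).
Proof.
move=> l; have [A [zA AE]] := copen l j.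
exists (fun v => ~ A v); split; first exact: zA.
move=> v; split.
  move=> [x [[dl ndj] <-]]; split; first exact: cmap_zero_set.
  move=> /(conj (cmap_zero_set dl)) /AE [y [[dly djy] ey]].
  by apply: ndj; rewrite -(cinj _ _ _ dly dl ey).
move=> [/conto [x [d ex]] nA]; exists x; split=> //; split=> // dj.
by apply: nA; rewrite -ex; apply: ((AE _).1 _).2; exists x.
Qed.

Lemma vmorphism_cdom_nbhd (f : vpt X -> vpt X) i j x0 :
  vmorphism f -> cdom i x0 -> cdom j (f x0) ->
  exists N, [/\ zopen N, N (cmap i x0) & forall x, cdom i x -> N (cmap i x) -> cdom j (f x)].
Proof.
move=> [fcont _] di dj.
have [A [zA AE]] := fcont _ (vclosed_cdomC j) i.
exists (fun v => ~ A v); split; first exact: zopenC.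
  move=> /(conj (cmap_zero_set di)) /AE [y [[diy ny] ey]].
  by apply: ny; rewrite (cinj _ _ _ diy di ey).
move=> x dx nA; apply: NNPP => ndj; apply: nA.
exact: ((AE _).1 (ex_intro _ x (conj (conj dx ndj) erefl))).2.
Qed.

Lemma separated_diag_poly j k (a b : vpt X) : cdom j a -> cdom k b -> a <> b ->
  exists2 s : {mpoly C[cdim j + cdim k]},
    s.@[pairpt (cmap j a) (cmap k b)] != 0 &
    forall x, cdom j x -> cdom k x -> s.@[pairpt (cmap j x) (cmap k x)] = 0.
Proof.
move=> dja dkb neq_ab; have [A [[S AS] AE]] := csep j k.
have onV x y : cdom j x -> cdom k y ->
    zero_set (ceqs j) (fun c => pairpt (cmap j x) (cmap k y) (lshift (cdim k) c)) /\
    zero_set (ceqs k) (fun c => pairpt (cmap j x) (cmap k y) (rshift (cdim j) c)).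
  by move=> djx dky; rewrite pairpt_lshift pairpt_rshift; split; apply: cmap_zero_set.
have nAab : ~ A (pairpt (cmap j a) (cmap k b)).
  move=> /(conj (onV _ _ dja dkb)) /AE [y [[djy dky] eab]]; apply: neq_ab.
  have ej : cmap j y = cmap j a.
    by move/(congr1 (fun w c => w (lshift _ c))): eab; rewrite !pairpt_lshift.
  have ek : cmap k y = cmap k b.
    by move/(congr1 (fun w c => w (rshift _ c))): eab; rewrite !pairpt_rshift.
  by rewrite -(cinj _ _ _ djy dja ej) (cinj _ _ _ dky dkb ek).
have [s Ss sab] : exists2 s, S s & s.@[pairpt (cmap j a) (cmap k b)] != 0.
  apply: NNPP => ns; apply: nAab; apply/AS => s Ss; apply: NNPP => sab.
  by apply: ns; exists s => //; apply/eqP.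
exists s => // x djx dkx; apply: ((AS _).1 _ s Ss).
by apply: ((AE _).1 _).2; exists x.
Qed.

Lemma vclosed_equalizer (f g : vpt X -> vpt X) :
  vmorphism f -> vmorphism g -> vclosed (fun x => f x = g x).
Proof.
move=> hf hg; apply: vclosed_local => i x0 di neq_fg.
have [j dj] := ccover (f x0); have [k dk] := ccover (g x0).
have [s sx0 s_diag] := separated_diag_poly dj dk neq_fg.
have [tf [rf ef]] := hf.2 i j; have [tg [rg eg]] := hg.2 i k.
pose O := img (cmap i) (fun x => [/\ cdom i x, cdom j (f x) & cdom k (g x)]).
have rF : regular_fun O (fun v => s.@[pairpt (tf v) (tg v)]).
  apply: regular_fun_meval => l; rewrite /pairpt; case: (split l) => [a|b].
    by apply: regular_fun_sub (rf a) => v [x [[d d1 _] <-]]; exists x.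
  by apply: regular_fun_sub (rg b) => v [x [[d _ d2] <-]]; exists x.
have Ox0 : O (cmap i x0) by exists x0.
have [|N1 [zN1 N1x HN1]] := regular_fun_neq0_nbhd rF Ox0; first by rewrite ef // eg.
have [N2 [zN2 N2x HN2]] := vmorphism_cdom_nbhd hf di dj.
have [N3 [zN3 N3x HN3]] := vmorphism_cdom_nbhd hg di dk.
exists (fun v => N1 v /\ N2 v /\ N3 v); split=> //; first by apply: zopenI => //; apply: zopenI.
move=> x dx [n1 [n2 n3]] efg.
have fj := HN2 x dx n2; have gk := HN3 x dx n3.
have := HN1 _ n1 (ex_intro _ x (conj (And3 dx fj gk) erefl)).
by rewrite ef // eg // -efg s_diag ?eqxx // efg.
Qed.

End ClosedSubsets.

Section TwistedFixedLocus.
Variables (X : variety) (W Z : finGroupType).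
Variables (actW : W -> vpt X -> vpt X) (actZ : Z -> vpt X -> vpt X) (z : Z).
Hypothesis actW1 : forall x, actW 1%g x = x.
Hypothesis actWM : forall a b x, actW (a * b)%g x = actW a (actW b x).
Hypothesis actW_comm : forall w x, actW w (actZ z x) = actZ z (actW w x).

Definition qimage (E : vpt X -> Prop) : quot actW -> Prop :=
  fun y => exists2 x, sval y x & E x.

Lemma qimage_qproj (E : vpt X -> Prop) x :
  (forall w x, E (actW w x) -> E x) -> qimage E (qproj actW x) <-> E x.
Proof.
move=> EW; split=> [[_ [w ->]]|Ex]; first exact: EW.
by exists x => //; exists 1%g; rewrite actW1.
Qed.

Lemma qclosed_qimage (E : vpt X -> Prop) :
  vclosed E -> (forall w x, E (actW w x) -> E x) -> qclosed actW (qimage E).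
Proof. by move=> cE EW; apply: (vclosed_ext cE) => x; apply: iff_sym (qimage_qproj _ EW). Qed.

Lemma free_locus_act_inj x a b : free_locus actW x -> actW a x = actW b x -> a = b.
Proof.
move=> free_x eab; rewrite -(mulKVg b a) (free_x (b^-1 * a)%g) ?mulg1 //.
by rewrite actWM eab -actWM mulVg actW1.
Qed.

Definition twisted_fixed (Q : pred W) (x : vpt X) : Prop :=
  exists2 w, Q w & actW w x = actZ z x.

Lemma twisted_fixed_closed (Q : pred W) :
  (forall w, vmorphism (actW w)) -> vmorphism (actZ z) -> vclosed (twisted_fixed Q).
Proof.
move=> morphW morphZ.
have /vclosed_exists : forall w, vclosed (fun x => Q w /\ actW w x = actZ z x).
  move=> w; case: (Q w).
    by apply: vclosed_ext (vclosed_equalizer (morphW w) morphZ) _ => x; split=> [|[]].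
  by apply: vclosed_ext (@vclosed_set0 X) _ => x; split=> [|[]].
by move/vclosed_ext; apply=> x; split=> [[w []]|[w]]; exists w.
Qed.

Lemma twisted_fixedJ (Q : pred W) : (forall w u, Q (w ^ u)%g = Q w) ->
  forall v x, twisted_fixed Q (actW v x) -> twisted_fixed Q x.
Proof.
move=> QJ v x [w Qw e]; exists (w ^ v)%g; first by rewrite QJ.
by rewrite conjgE !actWM e -actW_comm -actWM mulVg actW1.
Qed.

Lemma qfixed_qproj x w : actW w x = actZ z x -> qfixed actW actZ z (qproj actW x).
Proof.
move=> e; apply: functional_extensionality => y; apply: propositional_extensionality.
split=> [[_ [[v ->] <-]]|[v ->]].
  by exists (v * w)%g; rewrite -actW_comm -e actWM.
exists (actW (v * w^-1)%g x); split; first by exists (v * w^-1)%g.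
by rewrite -actW_comm -e -actWM mulgVK.
Qed.

Lemma qfixed_twisted y : qfixed actW actZ z y ->
  exists2 x, sval y x & exists w, actW w x = actZ z x.
Proof.
case: y => O [x eO]; rewrite /qfixed /= => zO; subst O.
have [w zx] : Defs.orbit actW x (actZ z x).
  by rewrite -zO; exists x; split=> //; exists 1%g; rewrite actW1.
by exists x; [exists 1%g; rewrite actW1 | exists w].
Qed.

End TwistedFixedLocus.

Theorem theorem4p1 (X : variety) (W Z : finGroupType)
    (actW : W -> vpt X -> vpt X) (actZ : Z -> vpt X -> vpt X)
    (hW : action_by_morphisms actW) (hZ : action_by_morphisms actZ)
    (hcomm : forall (w : W) (z : Z) (x : vpt X),
        actW w (actZ z x) = actZ z (actW w x))
    (z : Z) (hirr : qirreducible actW (qfixed actW actZ z))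
    (w1 w2 : W) (x1 x2 : vpt X)
    (hx1 : free_locus actW x1) (hx2 : free_locus actW x2)
    (h1 : actW w1 x1 = actZ z x1) (h2 : actW w2 x2 = actZ z x2) :
  exists u : W, w2 = (w1 ^ u)%g.
Proof.
have [actW1 actWM morphW] := hW; have [_ _ morphZ] := hZ.
have commz := hcomm^~ z.
pose C := (w1 ^: [set: W])%g.
have inCJ w v : ((w ^ v)%g \in C) = (w \in C).
  by apply: class_transl; rewrite memJ_class ?inE.
have outCJ w v : ((w ^ v)%g \notin C) = (w \notin C) by rewrite inCJ.
have closed_tw (Q : pred W) (QJ : forall w u, Q (w ^ u)%g = Q w) := qclosed_qimage actW1
  (twisted_fixed_closed Q morphW (morphZ z)) (twisted_fixedJ actW1 actWM commz QJ).
pose A : quot actW -> Prop := qimage (twisted_fixed actW actZ z [pred w | w \in C]).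
pose B : quot actW -> Prop := qimage (twisted_fixed actW actZ z [pred w | w \notin C]).
have cover y : qfixed actW actZ z y -> A y \/ B y.
  move=> /(qfixed_twisted actW1) [x yx [w e]].
  by have [wC|wC] := boolP (w \in C); [left | right]; exists x => //; exists w.
have [inA|inB] := hirr.2 A B (closed_tw _ inCJ) (closed_tw _ outCJ) cover.
- have /(qimage_qproj actW1 _ (twisted_fixedJ actW1 actWM commz inCJ)) [w wC e] :=
    inA _ (qfixed_qproj actWM commz h2).
  have <- : w = w2 by apply: (free_locus_act_inj actW1 actWM hx2); rewrite e h2.
  by have /imsetP [u _ ->] := wC; exists u.
- have /(qimage_qproj actW1 _ (twisted_fixedJ actW1 actWM commz outCJ)) [w /negP wC e] :=
    inB _ (qfixed_qproj actWM commz h1).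
  have w_w1 : w = w1 by apply: (free_locus_act_inj actW1 actWM hx1); rewrite e h1.
  by case: wC; rewrite w_w1 class_refl.
Qed.
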